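(* Assume the setting and assumptions (A1)–(A5) described in the context, and assume additionally that the push-forward measures $\iota_n(M_n)$ converge weakly to a probability measure $P$ on $\bar L$. Then the operator $A:\mathcal F\to\mathcal F$ is symmetric with respect to the inner product $(f,g)=\int_{\bar L}fg\,dP$, i.e. $\int (Af)g\,dP=\int f(Ag)\,dP$ for all $f,g\in\mathcal F$.
   Context: $L=\bigsqcup_{n\ge0}L_n$ is a graded set with $L_0$ a singleton and each $L_n$ finite; $p^\downarrow:L\times L\to[0,\infty)$ vanishes unless $|\lambda|=|\mu|+1$ and $\sum_{\mu\in L_{|\lambda|-1}}p^\downarrow(\lambda,\mu)=1$ for $|\lambda|\ge1$. $\{M_n\}$ is a coherent system (probability measures on $L_n$ with $\sum_{\lambda\in L_n}M_n(\lambda)p^\downarrow(\lambda,\mu)=M_{n-1}(\mu)$) with $M_n(\lambda)>0$ everywhere; $p^\uparrow(\lambda,\nu)=\frac{M_{n+1}(\nu)}{M_n(\lambda)}p^\downarrow(\nu,\lambda)$; $(T_ng)(\lambda)=\sum_{\nu\in L_{n+1}}p^\uparrow(\lambda,\nu)\sum_{\tilde\lambda\in L_n}p^\downarrow(\nu,\tilde\lambda)g(\tilde\lambda)$ on real functions on $L_n$ (norm $\|g\|_n=\sup|g|$). $\bar L$ is a topological space, $\iota_n:L_n\to\bar L$ injective, $\pi_n:C(\bar L)\to C(L_n)$, $(\pi_nf)(\lambda)=f(\iota_n(\lambda))$, $C(\bar L)$ with sup norm. Assumptions: (A1) $\bar L$ compact metrizable separable; (A2) every nonempty open set meets $\iota_n(L_n)$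 for all large $n$; (A3) there is a dense subspace $\mathcal F\subset C(\bar L)$ with an exhaustive ascending sequence of finite-dimensional subspaces $\mathcal F^m$ such that for each $m$ and all large $n$, $\pi_n$ is injective on $\mathcal F^m$ and $\pi_n(\mathcal F^m)$ is $T_n$-invariant; (A4) there are $\varepsilon_n>0$, $\varepsilon_n\to0$, such that for $f\in\mathcal F^m$ the elements $g_n\in\mathcal F^m$ with $\pi_n(g_n)=\varepsilon_n^{-1}(T_n-\mathbf 1)\pi_n f$ converge in $\mathcal F^m$ to a limit $Af$, defining $A:\mathcal F\to\mathcal F$; (A5) $1\in\mathcal F$. *)

From HB Require Import structures.
From mathcomp Require Import all_boot all_order all_algebra.
From mathcomp Require Import all_classical all_reals all_analysis.
Import Order.TTheory GRing.Theory Num.Theory.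
Import numFieldNormedType.Exports.
Local Open Scope classical_set_scope.
Local Open Scope ring_scope.

(* The graded set L = ⊔_n L_n is given as a family of finite types L n.
   pd n nu lam = p^↓(nu, lam) for nu ∈ L_{n+1}, lam ∈ L_n (p^↓ vanishes
   off consecutive levels, so only these values are relevant). *)

Definition p_up {R : realType} (L : nat -> finType)
  (pd : forall n, L n.+1 -> L n -> R) (M : forall n, L n -> R)
  (n : nat) (lam : L n) (nu : L n.+1) : R :=
  M n.+1 nu / M n lam * pd n nu lam.

Definition T_op {R : realType} (L : nat -> finType)
  (pd : forall n, L n.+1 -> L n -> R) (M : forall n, L n -> R)
  (n : nat) (g : L n -> R) : L n -> R :=
  fun lam => \sum_(nu : L n.+1)
     @p_up R L pd M n lam nu * \sum_(lam' : L n) pd n nu lam' * g lam'.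

Definition pi_n {R : realType} {T : Type} (L : nat -> finType)
  (iota : forall n, L n -> T) (n : nat) (f : T -> R) : L n -> R :=
  fun lam => f (iota n lam).

Definition span_of {R : realType} {T : Type} (k : nat) (b : 'I_k -> T -> R)
  : set (T -> R) :=
  [set f | exists c : 'I_k -> R, f = fun x => \sum_(i < k) c i * b i x].

Definition fin_dim_subspace {R : realType} {T : Type} (V : set (T -> R)) :=
  exists (k : nat) (b : 'I_k -> T -> R), V = span_of k b.

From HB Require Import structures.
From mathcomp Require Import all_boot all_order all_algebra.
From mathcomp Require Import all_classical all_reals all_analysis.
From mathcomp Require Import ring.
Import Order.TTheory GRing.Theory Num.Theory.
Import numFieldNormedType.Exports.
Local Open Scope classical_set_scope.
Local Open Scope ring_scope.

(* The relation M_n(lam) p^up(lam, nu) = M_{n+1}(nu) p^down(nu, lam) makes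
   (T_n u, v)_{M_n} equal to the symmetric expression
   sum_nu M_{n+1}(nu) (p^down u)(nu) (p^down v)(nu), so T_n, and with it the
   discrete generator eps_n^-1 (T_n - 1), is self-adjoint for the M_n-weighted
   inner product on L_n.  For f in F_m, the elements of F_m whose pullback
   is eps_n^-1 (T_n - 1) pi_n f converge uniformly to Af, so the discrete
   pairings of (Af, g) and of (f, Ag) differ by o(1); by weak convergence of
   iota_n(M_n) to P they converge to int (Af) g dP and int f (Ag) dP. *)

Lemma fin_dim_subspace_lincomb {R : realType} {T : Type} (V : set (T -> R))
    (a b : R) (f g : T -> R) :
  fin_dim_subspace V -> V f -> V g -> V (fun x => a * f x + b * g x).
Proof.
move=> [k [bs ->]] [c ->] [d ->].
exists (fun i => a * c i + b * d i); apply: funext => x.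
rewrite 2!mulr_sumr -big_split /=; apply: eq_bigr => i _.
by rewrite mulrDl !mulrA.
Qed.

Lemma compact_continuous_bounded {R : realType} {T : topologicalType}
    {h : T -> R} :
  compact [set: T] -> continuous h ->
  exists2 B : R, 0 < B & forall x, `|h x| <= B.
Proof.
move=> cT ch.
have /compact_bounded[B [_ HB]] : compact [set h x | x in [set: T]].
  by apply: continuous_compact => //; exact: continuous_subspaceT.
exists (Num.max (B + 1) 1); first by rewrite lt_max ltr01 orbT.
move=> x; apply: HB; last by exists x.
by rewrite lt_max ltrDl ltr01.
Qed.

Lemma cvge_eq_of_subr_cvg0 {R : realType} {a b : nat -> R} {x y : \bar R} :
  (fun n => (a n)%:E) @ \oo --> x -> (fun n => (b n)%:E) @ \oo --> y ->
  (fun n => a n - b n) @ \oo --> 0 -> x = y.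
Proof.
move=> ax bx abx.
have ay : (fun n => (a n)%:E) @ \oo --> y.
  have -> : (fun n => (a n)%:E) = (fun n => (b n)%:E + (a n - b n)%:E)%E.
    by apply: funext => n; rewrite -EFinD addrC subrK.
  have ab0 : (fun n => (a n - b n)%:E) @ \oo --> (0 : R)%:E.
    by apply: cvg_EFin abx; exact: nearW.
  by rewrite -[y]adde0; exact: cvgeD (fin_num_adde_defl _ _) bx ab0.
exact: cvg_unique ax ay.
Qed.

Lemma nondecreasing_bigcup2 {T : Type} (S : nat -> set T) (x y : T) :
  (forall m, S m `<=` S m.+1) -> (\bigcup_m S m) x -> (\bigcup_m S m) y ->
  exists2 m, S m x & S m y.
Proof.
move=> S_incr [i _ Six] [j _ Sjy].
have S_nd : nondecreasing_seq S.
  by apply/nondecreasing_seqP => k; apply/subsetPset/S_incr.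
exists (maxn i j).
  by move: (S_nd _ _ (leq_maxl i j)) => /subsetPset; apply.
by move: (S_nd _ _ (leq_maxr i j)) => /subsetPset; apply.
Qed.

Section weighted_dot.
Context {R : realType} {I : finType}.

Definition wdot (w u v : I -> R) : R := \sum_i w i * (u i * v i).

Lemma wdotC (w u v : I -> R) : wdot w u v = wdot w v u.
Proof. by apply: eq_bigr => i _; rewrite [u i * _]mulrC. Qed.

Lemma wdotBl (w u u' v : I -> R) :
  wdot w (u \- u') v = wdot w u v - wdot w u' v.
Proof. by rewrite /wdot -sumrB; apply: eq_bigr => i _ /=; ring. Qed.

Lemma wdotB_adjoint (w a a' b b' u v : I -> R) :
  wdot w a' v = wdot w u b' ->
  wdot w (a \- a') v - wdot w (b \- b') u = wdot w a v - wdot w u b.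
Proof. by move=> adj; rewrite !wdotBl adj (wdotC w b) (wdotC w b'); ring. Qed.

Lemma norm_wdot_le (w u v : I -> R) (e B : R) :
  (forall i, 0 <= w i) -> \sum_i w i = 1 ->
  (forall i, `|u i| <= e) -> (forall i, `|v i| <= B) ->
  `|wdot w u v| <= e * B.
Proof.
move=> w0 w1 ue vB.
apply: (le_trans (ler_norm_sum _ _ _)).
apply: (@le_trans _ _ (\sum_i w i * (e * B))).
  apply: ler_sum => i _; rewrite !normrM ger0_norm //.
  by apply: ler_wpM2l => //; apply: ler_pM.
by rewrite -mulr_suml w1 mul1r.
Qed.

End weighted_dot.

Lemma wdot_cvg0 {R : realType} {I : nat -> finType} {w u v : forall n, I n -> R}
    {B : R} :
  (forall n i, 0 <= w n i) -> (forall n, \sum_i w n i = 1) ->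
  (forall e, 0 < e -> exists N, forall n, (N <= n)%N -> forall i, `|u n i| < e) ->
  0 < B -> (forall n i, `|v n i| <= B) ->
  (fun n => wdot (w n) (u n) (v n)) @ \oo --> 0.
Proof.
move=> w0 w1 u0 B0 vB; apply/cvgrPdist_le => e e0.
have [N uN] := u0 (e / B) (divr_gt0 e0 B0).
exists N => // n /= Nn; rewrite sub0r normrN -(divfK (lt0r_neq0 B0) e).
by apply: norm_wdot_le => // i; apply/ltW/uN.
Qed.

Lemma wdot_pi_n_cvg0 {R : realType} {L : nat -> finType} {T : Type}
    {w : forall n, L n -> R} {iota : forall n, L n -> T}
    {G v : T -> R} {H : nat -> T -> R} {B : R} :
  (forall n i, 0 <= w n i) -> (forall n, \sum_i w n i = 1) ->
  (forall e, 0 < e -> exists N, forall n, (N <= n)%N ->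
     forall x, `|H n x - G x| < e) ->
  0 < B -> (forall x, `|v x| <= B) ->
  (fun n => wdot (w n) (pi_n L iota n G \- pi_n L iota n (H n))
                       (pi_n L iota n v)) @ \oo --> 0.
Proof.
move=> w0 w1 HG B0 vB; apply: (wdot_cvg0 (B := B)) => // [e e0|n i]; last exact: vB.
have [N HN] := HG e e0; exists N => n Nn i.
by rewrite /= distrC; exact: HN.
Qed.

Section discrete_generator.
Variables (R : realType) (L : nat -> finType).
Variables (pd : forall n, L n.+1 -> L n -> R) (M : forall n, L n -> R).
Hypothesis M_pos : forall n lam, 0 < M n lam.

Definition gen_op (c : R) n (u : L n -> R) : L n -> R :=
  fun lam => c^-1 * (T_op L pd M n u lam - u lam).

Lemma wdot_T_opE n (u v : L n -> R) :
  wdot (M n) (T_op L pd M n u) v =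
  \sum_(nu : L n.+1) M n.+1 nu * ((\sum_lam pd n nu lam * u lam)
                                  * (\sum_lam pd n nu lam * v lam)).
Proof.
rewrite /wdot /T_op /p_up.
under eq_bigr => lam _ do rewrite mulr_suml mulr_sumr.
rewrite exchange_big /=; apply: eq_bigr => nu _.
rewrite mulrA mulr_sumr; apply: eq_bigr => lam _.
by field; exact: lt0r_neq0.
Qed.

Lemma wdot_T_opC n (u v : L n -> R) :
  wdot (M n) (T_op L pd M n u) v = wdot (M n) u (T_op L pd M n v).
Proof.
rewrite [RHS]wdotC !wdot_T_opE; apply: eq_bigr => nu _.
by rewrite [X in _ * X]mulrC.
Qed.

Lemma wdot_gen_opC c n (u v : L n -> R) :
  wdot (M n) (gen_op c n u) v = wdot (M n) u (gen_op c n v).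
Proof.
have wdot_gen u' v' : wdot (M n) (gen_op c n u') v' =
    c^-1 * (wdot (M n) (T_op L pd M n u') v' - wdot (M n) u' v').
  by rewrite /wdot -sumrB mulr_sumr; apply: eq_bigr => lam _; rewrite /gen_op; ring.
by rewrite wdot_gen [RHS]wdotC wdot_gen wdot_T_opC wdotC [wdot _ u v]wdotC.
Qed.

Lemma gen_op_lift (T : Type) (iota : forall n, L n -> T) (V : set (T -> R))
    (eps : nat -> R) (N : nat) :
  fin_dim_subspace V ->
  (forall n, (N <= n)%N -> forall u, V u ->
     exists2 g, V g & pi_n L iota n g = T_op L pd M n (pi_n L iota n u)) ->
  forall u, V u -> exists G : nat -> T -> R, forall n, (N <= n)%N ->
    V (G n) /\ pi_n L iota n (G n) = gen_op (eps n) n (pi_n L iota n u).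
Proof.
move=> Vfd VT u Vu.
suff /choice[G HG] : forall n, exists G : T -> R, (N <= n)%N ->
    V G /\ pi_n L iota n G = gen_op (eps n) n (pi_n L iota n u).
  by exists G.
move=> n; have [Nn|_] := leqP N n; last by exists (fun _ => 0).
have [g Vg Eg] := VT n Nn u Vu.
exists (fun x => (eps n)^-1 * g x + - (eps n)^-1 * u x) => _.
split; first exact: fin_dim_subspace_lincomb.
apply: funext => lam; rewrite /gen_op -Eg /pi_n; ring.
Qed.

End discrete_generator.

Arguments gen_op_lift {R L pd M T iota V} eps {N} _ _ {u}.

Theorem proposition1p7
  (R : realType) (L : nat -> finType)
  (hL0 : #|L 0%N| = 1%N)
  (pd : forall n, L n.+1 -> L n -> R)
  (pd_ge0 : forall n nu lam, 0 <= pd n nu lam)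
  (pd_sum1 : forall n (nu : L n.+1), \sum_(lam : L n) pd n nu lam = 1)
  (M : forall n, L n -> R)
  (M_ge0 : forall n lam, 0 <= M n lam)
  (M_sum1 : forall n, \sum_(lam : L n) M n lam = 1)
  (M_coh : forall n (mu : L n),
      \sum_(lam : L n.+1) M n.+1 lam * pd n lam mu = M n mu)
  (M_pos : forall n lam, 0 < M n lam)
  (* (A1): \bar L compact metrizable (hence separable) *)
  (Lb : pseudoPMetricType R)
  (Lb_hausdorff : hausdorff_space Lb)
  (Lb_compact : compact [set: Lb])
  (iota : forall n, L n -> Lb)
  (iota_inj : forall n, injective (iota n))
  (* (A2) *)
  (A2 : forall U : set Lb, open U -> U !=set0 ->
      exists N, forall n, (N <= n)%N -> exists lam, U (iota n lam))
  (* (A3) *)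
  (F : set (Lb -> R)) (Fm : nat -> set (Lb -> R))
  (F_cont : forall f, F f -> continuous f)
  (F_dense : forall f : Lb -> R, continuous f -> forall e : R, 0 < e ->
      exists2 g, F g & forall x, `|f x - g x| < e)
  (Fm_fd : forall m, fin_dim_subspace (Fm m))
  (Fm_incr : forall m, Fm m `<=` Fm m.+1)
  (F_union : F = \bigcup_m Fm m)
  (A3 : forall m, exists N, forall n, (N <= n)%N ->
      {in Fm m &, injective (@pi_n R Lb L iota n)} /\
      (forall f, Fm m f -> exists2 g, Fm m g &
          @pi_n R Lb L iota n g = @T_op R L pd M n (@pi_n R Lb L iota n f)))
  (* (A4) *)
  (eps : nat -> R) (eps_pos : forall n, 0 < eps n)
  (eps_cvg : eps @ \oo --> 0)
  (A : (Lb -> R) -> (Lb -> R))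
  (A_Fm : forall m f, Fm m f -> Fm m (A f))
  (A4 : forall m f, Fm m f -> forall g : nat -> Lb -> R,
      (exists N, forall n, (N <= n)%N -> Fm m (g n) /\
         @pi_n R Lb L iota n (g n) =
           (fun lam => (eps n)^-1 *
              (@T_op R L pd M n (@pi_n R Lb L iota n f) lam - @pi_n R Lb L iota n f lam))) ->
      forall e : R, 0 < e -> exists N, forall n, (N <= n)%N ->
         forall x, `|g n x - A f x| < e)
  (* (A5) *)
  (A5 : F (fun _ => 1))
  (* P : Borel probability measure on \bar L; weak convergence iota_n(M_n) => P *)
  (P : probability (g_sigma_algebraType (@open Lb)) R)
  (weak : forall f : Lb -> R, continuous f ->
      (fun n => (\sum_(lam : L n) M n lam * f (iota n lam))%:E) @ \oo -->
        (\int[P]_x (f x)%:E)%E)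
  : forall f g, F f -> F g ->
      (\int[P]_x (A f x * g x)%:E = \int[P]_x (f x * A g x)%:E)%E.
Proof.
move=> f g Ff Fg.
have [m Fmf Fmg] : exists2 m, Fm m f & Fm m g.
  by apply: nondecreasing_bigcup2 => //; rewrite -F_union.
have [N HN] := A3 m.
have FmT n (Nn : (N <= n)%N) := (HN n Nn).2.
have [Gf HGf] := gen_op_lift eps (Fm_fd m) FmT Fmf.
have [Gg HGg] := gen_op_lift eps (Fm_fd m) FmT Fmg.
have FmC u : Fm m u -> continuous u.
  by move=> Fmu; apply: F_cont; rewrite F_union; exists m.
have [cf cAf] := (FmC _ Fmf, FmC _ (A_Fm m f Fmf)).
have [cg cAg] := (FmC _ Fmg, FmC _ (A_Fm m g Fmg)).
apply: (cvge_eq_of_subr_cvg0 (weak (A f \* g) (fun x => continuousM (cAf x) (cg x)))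
                             (weak (f \* A g) (fun x => continuousM (cf x) (cAg x)))).
have [Bf Bf0 fBf] := compact_continuous_bounded Lb_compact cf.
have [Bg Bg0 gBg] := compact_continuous_bounded Lb_compact cg.
rewrite -[X in _ --> X](subr0 (0 : R)).
apply: cvg_trans (cvgB
  (wdot_pi_n_cvg0 M_ge0 M_sum1 (A4 m f Fmf Gf (ex_intro _ N HGf)) Bg0 gBg)
  (wdot_pi_n_cvg0 M_ge0 M_sum1 (A4 m g Fmg Gg (ex_intro _ N HGg)) Bf0 fBf)).
apply: near_eq_cvg; exists N => // n /= Nn.
apply: wdotB_adjoint.
by rewrite (HGf n Nn).2 (HGg n Nn).2; exact: wdot_gen_opC.
Qed.
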